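(* Let $\eta(y)=\sum_{k=0}^\infty M_k y^{(k)}$ be a finite order differential operator on $\mathcal{P}_c$ (i.e. $M_k\equiv 0$ for all $k>r$ for some $r\in\mathbb{N}$), let $p=(p_n)_{n\in\mathbb{N}_0}$ be a polynomial sequence and $d\in\widetilde{D}$ with $\eta p_n=d_np_n$ for all $n\in\mathbb{N}_0$. Let $d'\in\widetilde{D}$ with $d'\neq d$ and $d'_k=d_k$ for all but finitely many $k$. Then any formal differential operator $\widetilde{\eta}$ with $\widetilde{\eta}p_n=d'_np_n$ for all $n\in\mathbb{N}_0$ is of infinite order, i.e. it is not a finite order differential operator.
   Context: $\mathcal{P}_c$ is the space of polynomials in one real variable with complex coefficients. A formal differential operator is a map $\mathcal{P}_c\to\mathcal{P}_c$, $y\mapsto\sum_{k=0}^\infty M_k y^{(k)}$ (a finite sum on each polynomial), where $M_k$ are complex polynomials with $\deg M_k\le k$ and $M_0$ constant. A polynomial sequence (PS) is $p=(p_n)_{n\in\mathbb{N}_0}$ with $p_0\equiv1$ and $\deg p_n=n$. $\widetilde{D}$ is the set of non-constant sequences $(d_n)_{n\in\mathbb{N}_0}$ of non-zero complex numbers. *)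

From HB Require Import structures.
From mathcomp Require Import all_boot all_order all_algebra.
From mathcomp Require Import reals.
From mathcomp.real_closed Require Import complex.
Set Implicit Arguments. Unset Strict Implicit. Unset Printing Implicit Defensive.
Import Order.TTheory GRing.Theory Num.Theory.
Local Open Scope ring_scope.

Section Defs.
Variable C : fieldType.

(* A formal differential operator is given by its coefficient sequence
   M : nat -> {poly C}, with deg M_k <= k (i.e. size (M k) <= k+1; the zero
   polynomial is allowed) and M_0 constant (automatic from deg M_0 <= 0). *)
Definition is_fdo (M : nat -> {poly C}) : Prop :=
  forall k, (size (M k) <= k.+1)%N.

(* Action y |-> sum_k M_k y^(k); the sum is finite since y^(k) = 0 for k >= size y. *)
Definition fdo_apply (M : nat -> {poly C}) (y : {poly C}) : {poly C} :=
  \sum_(k < size y) M k * y^`(k).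

Definition finite_order (M : nat -> {poly C}) : Prop :=
  exists r : nat, forall k, (r < k)%N -> M k = 0.

Definition is_PS (p : nat -> {poly C}) : Prop :=
  p 0%N = 1 /\ forall n, size (p n) = n.+1.

Definition in_Dtilde (d : nat -> C) : Prop :=
  (forall n, d n != 0) /\ exists m n, d m != d n.
End Defs.

From HB Require Import structures.
From mathcomp Require Import all_boot all_order all_algebra.
From mathcomp Require Import reals.
From mathcomp.real_closed Require Import complex.
From mathcomp Require Import zify.
Set Implicit Arguments. Unset Strict Implicit. Unset Printing Implicit Defensive.
Import Order.TTheory GRing.Theory Num.Theory.
Local Open Scope ring_scope.

(* D := eta~ - eta is a finite order operator that kills p_n for all large n
   but not p_k where d'_k <> d_k.  For such an operator the coefficient of
   x^(m-s) in D x^m is Q_s(m) for a polynomial Q_s built from falling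
   factorials.  If some Q_s were nonzero, then for the least such s and a large
   n with Q_s(n) <> 0 the coefficient of x^(n-s) in D p_n would be
   lead(p_n) Q_s(n) <> 0.  So every Q_s vanishes, D kills every monomial, hence
   every polynomial, a contradiction. *)

Lemma big_ord_widen_eq0 (V : nmodType) (F : nat -> V) a b : (a <= b)%N ->
  (forall k, (a <= k)%N -> F k = 0) -> \sum_(k < a) F k = \sum_(k < b) F k.
Proof.
move=> le_ab F_eq0; rewrite (big_ord_widen b F le_ab) big_mkcond /=.
by apply: eq_bigr => k _; case: ltnP => // /F_eq0.
Qed.

Section FdoAlgebra.
Variable C : fieldType.
Implicit Types (D E : nat -> {poly C}) (y : {poly C}).

Lemma fdo_apply_widen D y B : (size y <= B)%N ->
  fdo_apply D y = \sum_(k < B) D k * y^`(k).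
Proof.
move=> le_yB; apply: (big_ord_widen_eq0 (F := fun k => D k * y^`(k)) le_yB) => k le_yk.
by rewrite derivn_poly0 ?mulr0 // (leq_trans le_yB).
Qed.

Lemma fdo_apply_finite D r : (forall k, (r < k)%N -> D k = 0) ->
  forall y, fdo_apply D y = \sum_(k < r.+1) D k * y^`(k).
Proof.
move=> D_eq0 y; rewrite (fdo_apply_widen D (leq_maxl _ r.+1)).
symmetry; apply: (big_ord_widen_eq0 (F := fun k => D k * y^`(k)) (leq_maxr _ _)).
by move=> k /D_eq0 ->; rewrite mul0r.
Qed.

Lemma fdo_apply_expand D y :
  fdo_apply D y = \sum_(i < size y) y`_i *: fdo_apply D 'X^i.
Proof.
rewrite {1}/fdo_apply; under eq_bigr => k _ do
  rewrite -[y in y^`(k)]coefK poly_def raddf_sum mulr_sumr.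
rewrite exchange_big /=; apply: eq_bigr => i _.
rewrite (@fdo_apply_widen D _ (size y)) ?size_polyXn // scaler_sumr.
by apply: eq_bigr => k _; rewrite derivnZ scalerAr.
Qed.

Lemma is_fdoB D E : is_fdo D -> is_fdo E -> is_fdo (fun k => D k - E k).
Proof.
move=> fdoD fdoE k; apply: leq_trans (size_polyD _ _) _.
by rewrite size_polyN geq_max fdoD fdoE.
Qed.

Lemma finite_orderB D E :
  finite_order D -> finite_order E -> finite_order (fun k => D k - E k).
Proof.
move=> [r D_eq0] [s E_eq0]; exists (maxn r s) => k.
by rewrite gtn_max => /andP[/D_eq0 -> /E_eq0 ->]; rewrite subrr.
Qed.

Lemma fdo_applyB D E y :
  fdo_apply (fun k => D k - E k) y = fdo_apply D y - fdo_apply E y.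
Proof. by rewrite /fdo_apply -sumrB; apply: eq_bigr => k _; rewrite mulrBl. Qed.

End FdoAlgebra.

Section TailAnnihilator.
Variable C : numFieldType.

Lemma exists_nonroot_nat_ge (q : {poly C}) L :
  q != 0 -> exists2 n, (L <= n)%N & q.[n%:R] != 0.
Proof.
move=> q_neq0; set ns := iota L (size q).
have [/hasP[n]|/hasPn all_roots] := boolP (has (fun n => q.[n%:R] != 0) ns).
  by rewrite mem_iota => /andP[le_Ln _]; exists n.
have roots : all (root q) [seq n%:R | n <- ns].
  by apply/allP => _ /mapP[n /all_roots /negbNE q_n ->].
have uniq_ns : uniq [seq n%:R : C | n <- ns].
  by rewrite map_inj_uniq ?iota_uniq // => a b /eqP; rewrite eqr_nat => /eqP.
by have := max_poly_roots q_neq0 roots uniq_ns; rewrite size_map size_iota ltnn.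
Qed.

Definition ffactp (k : nat) : {poly C} := \prod_(j < k) ('X - j%:R%:P).

Lemma horner_ffactp k m : (ffactp k).[m%:R] = (m ^_ k)%:R.
Proof.
elim: k => [|k IHk]; first by rewrite /ffactp big_ord0 hornerC ffactn0.
rewrite /ffactp big_ord_recr /= hornerM -/(ffactp k) IHk hornerXsubC ffactnSr.
case: (leqP k m) => [le_km|lt_mk]; first by rewrite natrM natrB.
by rewrite ffact_small ?mul0r.
Qed.

Variables (D : nat -> {poly C}) (r : nat).
Hypothesis fdoD : is_fdo D.
Hypothesis D_eq0 : forall k, (r < k)%N -> D k = 0.

Definition subdiag_poly s : {poly C} :=
  \sum_(k < r.+1) (if (s <= k)%N then (D k)`_(k - s) else 0) *: ffactp k.

Lemma coef_fdo_apply_Xn m i : (fdo_apply D 'X^m)`_i =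
  if (i <= m)%N then (subdiag_poly (m - i)).[m%:R] else 0.
Proof.
rewrite (fdo_apply_finite D_eq0) coef_sum; case: leqP => [le_im|lt_mi].
- rewrite /subdiag_poly horner_sum; apply: eq_bigr => k _.
  rewrite hornerZ horner_ffactp derivnXn mulrnAr coefMn.
  rewrite coefMXn mulr_natr; case: (leqP k m) => [le_km|lt_mk].
    by congr (_ *+ _); case: ltnP => ?; case: leqP => ? //; try lia; congr (_`_ _); lia.
  by rewrite ffact_small ?mulr0n ?mul0r.
- apply: big1 => k _; rewrite derivnXn mulrnAr coefMn coefMXn.
  case: ifP => _; first by rewrite mul0rn.
  case: (leqP k m) => [le_km|lt_mk]; last by rewrite ffact_small ?mulr0n.
  by rewrite nth_default ?mul0rn //; apply: leq_trans (fdoD k) _; lia.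
Qed.

Lemma coef_fdo_apply_Xn_eq0 t : (forall s, (s < t)%N -> subdiag_poly s = 0) ->
  forall m i, (m < i + t)%N -> (fdo_apply D 'X^m)`_i = 0.
Proof.
move=> Q_eq0 m i lt_m_it; rewrite coef_fdo_apply_Xn.
by case: ifP => // le_im; rewrite Q_eq0 ?horner0 //; lia.
Qed.

Lemma coef_fdo_apply_subdiag (y : {poly C}) n s :
  (forall s', (s' < s)%N -> subdiag_poly s' = 0) ->
  size y = n.+1 -> (s <= n)%N ->
  (fdo_apply D y)`_(n - s) = y`_n * (subdiag_poly s).[n%:R].
Proof.
move=> Q_eq0 size_y le_sn; rewrite fdo_apply_expand size_y coef_sum big_ord_recr /=.
rewrite coefZ coef_fdo_apply_Xn leq_subr subKn // big1 ?add0r // => i _.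
by rewrite coefZ (coef_fdo_apply_Xn_eq0 Q_eq0) ?mulr0 //; have := ltn_ord i; lia.
Qed.

Variables (p : nat -> {poly C}) (N : nat).
Hypothesis size_p : forall n, size (p n) = n.+1.
Hypothesis D_p_eq0 : forall n, (N <= n)%N -> fdo_apply D (p n) = 0.

Lemma subdiag_poly_eq0 s : subdiag_poly s = 0.
Proof.
elim/ltn_ind: s => s Q_eq0; apply/eqP; apply: contraT => Qs_neq0.
have [n] := exists_nonroot_nat_ge (maxn N s) Qs_neq0.
rewrite geq_max => /andP[le_Nn le_sn] Qsn_neq0.
have := coef_fdo_apply_subdiag Q_eq0 (size_p n) le_sn.
rewrite D_p_eq0 // coef0 => /esym/eqP; rewrite mulf_eq0 (negbTE Qsn_neq0) orbF.
have : lead_coef (p n) != 0 by rewrite lead_coef_eq0 -size_poly_eq0 size_p.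
by rewrite lead_coefE size_p => /negbTE ->.
Qed.

Lemma fdo_apply_eq0_of_tail y : fdo_apply D y = 0.
Proof.
rewrite fdo_apply_expand big1 // => i _.
suff -> : fdo_apply D 'X^i = 0 by rewrite scaler0.
apply/polyP => j; rewrite coef0 (@coef_fdo_apply_Xn_eq0 i.+1) //; last lia.
by move=> s _; exact: subdiag_poly_eq0.
Qed.

End TailAnnihilator.

Theorem proposition2 (R : realType)
  (M : nat -> {poly R[i]}) (p : nat -> {poly R[i]}) (d d' : nat -> R[i]) :
  is_fdo M -> finite_order M ->
  is_PS p -> in_Dtilde d ->
  (forall n, fdo_apply M (p n) = d n *: p n) ->
  in_Dtilde d' -> (exists k, d' k != d k) ->
  (exists N : nat, forall k, (N <= k)%N -> d' k = d k) ->
  forall M' : nat -> {poly R[i]}, is_fdo M' ->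
    (forall n, fdo_apply M' (p n) = d' n *: p n) ->
    ~ finite_order M'.
Proof.
move=> fdoM finM [_ size_p] _ Mp _ [k d'k_neq] [N d'_eq] M' fdoM' M'p finM'.
pose D k := M' k - M k.
have [r D_eq0] : finite_order D by exact: finite_orderB.
have Dp n : fdo_apply D (p n) = (d' n - d n) *: p n.
  by rewrite fdo_applyB Mp M'p scalerBl.
have D_tail n : (N <= n)%N -> fdo_apply D (p n) = 0.
  by move=> le_Nn; rewrite Dp d'_eq // subrr scale0r.
have := fdo_apply_eq0_of_tail (is_fdoB fdoM' fdoM) D_eq0 size_p D_tail (p k).
by rewrite Dp => /eqP; rewrite scaler_eq0 subr_eq0 (negbTE d'k_neq) -size_poly_eq0 size_p.
Qed.
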